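(* For every $n\geq 1$, \[\deg(\mathrm{nib}:S_n\to S_n)=\frac{(n-1)(n-2)^2+n^2}{n!}+\sum_{k=1}^{n-2}\frac{k(k^3-k+1)}{(k+2)!}.\] Furthermore, \[\lim_{n\to\infty}\deg(\mathrm{nib}:S_n\to S_n)=4e-9.\]
   Context: For finite sets $X,Y$ and $f:X\to Y$, $\deg(f)=\frac{1}{|X|}\sum_{y\in Y}|f^{-1}(y)|^2$. $S_n$ is the set of permutations $\pi=\pi_1\cdots\pi_n$ of $\{1,\dots,n\}$. A descent of $\pi$ is an index $i\in\{1,\dots,n-1\}$ with $\pi_i>\pi_{i+1}$. The nibble sort map $\mathrm{nib}:S_n\to S_n$ fixes the identity $12\cdots n$, and for $\pi\neq 12\cdots n$ with smallest descent $i$, $\mathrm{nib}(\pi)$ is obtained from $\pi$ by swapping $\pi_i$ and $\pi_{i+1}$. *)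

From HB Require Import structures.
From mathcomp Require Import all_boot all_order all_fingroup all_algebra.
From mathcomp Require Import all_classical all_reals all_analysis.
Set Implicit Arguments. Unset Strict Implicit. Unset Printing Implicit Defensive.
Import Order.TTheory GRing.Theory Num.Theory.
Local Open Scope ring_scope.

Definition deg {R : numFieldType} (X Y : finType) (f : X -> Y) : R :=
  (\sum_(y : Y) (#|[pred x | f x == y]| ^ 2))%N%:R / #|X|%:R.

(* Permutations of {1..n} are modelled by 'S_n = {perm 'I_n} (positions and
   values shifted to {0..n-1}).  Position i is a descent of s when there is a
   next position j = i+1 with s j < s i. *)
Definition is_descent n (s : 'S_n) (i : 'I_n) : bool :=
  [exists j : 'I_n, (val j == i.+1) && (s j < s i)%N].

(* nib: if s has a smallest descent i (with next position j = i+1),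
   swap the entries at positions i and j; otherwise (s = identity) fix s.
   (tperm i j * s) x = s (tperm i j x). *)
Definition nib n (s : 'S_n) : 'S_n :=
  match [pick ij : 'I_n * 'I_n |
          [&& val ij.2 == ij.1.+1, (s ij.2 < s ij.1)%N &
              [forall k : 'I_n, (k < ij.1)%N ==> ~~ is_descent s k]]] with
  | Some ij => (tperm ij.1 ij.2 * s)%g
  | None => s
  end.

(* Apart from the identity, the nib-preimages of a permutation s are the
   permutations obtained by swapping the entries of s at positions i and i+1,
   where i is a site of s: s(1) < ... < s(i-1) < s(i+1) and s(i) < s(i+1), so
   that the swapped permutation has its first descent at i.  Hence
   |nib^-1(s)| = [s = id] + c(s), with c(s) the number of sites of s.
   Appending a new last entry j to a permutation of S_n (and shifting the
   values >= j) does not change c, except that c grows by one when j = n+1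
   and the first n-1 entries increase.  Summing c^2 over S_(n+1) this way gives
   deg(nib_(n+1)) = deg(nib_n) + 6/(n+1)! - 2/n!.  The stated formula and
   4 sum_(k<n) 1/k! - 9 + 6/n! satisfy the same recurrence and both equal 1
   at n = 1, and the latter tends to 4e - 9. *)

From HB Require Import structures.
From mathcomp Require Import all_boot all_order all_fingroup all_algebra.
From mathcomp Require Import all_classical all_reals all_analysis.
From mathcomp Require Import zify ring lra.
Set Implicit Arguments. Unset Strict Implicit. Unset Printing Implicit Defensive.

Section IncreasingPrefix.

Implicit Types f g : nat -> nat.

Definition incr_prefix f i : bool := [forall k' : 'I_i, forall k : 'I_k', f k < f k'].

Lemma incr_prefixP f i :
  reflect (forall k k', k < k' -> k' < i -> f k < f k') (incr_prefix f i).
Proof.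
apply: (iffP forallP) => [H k k' lt_kk' lt_k'i | H k'].
  by have /forallP/(_ (Ordinal lt_kk')) := H (Ordinal lt_k'i).
by apply/forallP => k; apply: H.
Qed.

Lemma incr_prefix_adj f i :
  (forall k, k.+1 < i -> f k < f k.+1) -> incr_prefix f i.
Proof.
move=> f_adj; apply/incr_prefixP => k k' lt_kk' lt_k'i.
have f_incr : {in [pred x | x < i] &, {homo f : a b / a < b}}.
  apply: homo_ltn_in => [b a c|a b _ lt_bi c /andP[_ lt_cb]|a _ /f_adj//].
    exact: ltn_trans.
  exact: ltn_trans lt_bi.
exact: f_incr (ltn_trans lt_kk' lt_k'i) lt_k'i lt_kk'.
Qed.

Lemma incr_prefixW f i j : j <= i -> incr_prefix f i -> incr_prefix f j.
Proof.
move=> le_ji /incr_prefixP f_incr; apply/incr_prefixP => k k' lt_kk' lt_k'j.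
exact: f_incr lt_kk' (leq_trans lt_k'j le_ji).
Qed.

Lemma incr_prefix_comp f f' g i :
  {mono g : a b / a < b} -> (forall k, k < i -> f' k = g (f k)) ->
  incr_prefix f' i = incr_prefix f i.
Proof.
move=> g_mono f'E; apply/incr_prefixP/incr_prefixP => H k k' lt_kk' lt_k'i.
  by rewrite -g_mono -!f'E ?H // (ltn_trans lt_kk').
by rewrite !f'E ?g_mono ?H // (ltn_trans lt_kk').
Qed.

Definition first_descent f i : bool := incr_prefix f i.+1 && (f i.+1 < f i).

Lemma first_descent_uniq f i j : first_descent f i -> first_descent f j -> i = j.
Proof.
wlog lt_ij : i j / i < j.
  move=> W desc_i desc_j; case: (ltngtP i j) => [lt_ij|lt_ji|//].
  - exact: W.
  - by rewrite (W j i).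
case/andP=> _ desc_i /andP[/incr_prefixP f_incr _].
by rewrite ltnNge (ltnW (f_incr i i.+1 (ltnSn i) lt_ij)) in desc_i.
Qed.

(* Swapping the entries at i and i+1 undoes a nib step exactly at the sites i
   (first_descent_adj_tperm). *)
Definition nib_site f i : bool :=
  [forall k : 'I_i.+1, f k < f i.+1] && incr_prefix f i.

Lemma nib_site_comp f f' g i :
  {mono g : a b / a < b} -> (forall k, k <= i.+1 -> f' k = g (f k)) ->
  nib_site f' i = nib_site f i.
Proof.
move=> g_mono f'E.
rewrite /nib_site (@incr_prefix_comp f f' g) // => [|k lt_ki]; last first.
  by rewrite f'E // ltnW // ltnW.
congr (_ && _); apply: eq_forallb => k.
by rewrite !f'E ?g_mono // ltnW.
Qed.

End IncreasingPrefix.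

Lemma ltn_bump2 h i j : (bump h i < bump h j) = (i < j).
Proof. by rewrite !ltnNge leq_bump2. Qed.

Lemma perm_homo_ltn_eq1 n (s : 'S_n) : {homo s : a b / a < b} -> s = 1%g.
Proof.
have le_perm (t : 'S_n) : {homo t : a b / a < b} -> forall a : 'I_n, a <= t a.
  move=> t_incr [a lt_an]; elim: a lt_an => [//|a IH] lt_an.
  by apply: leq_ltn_trans (IH (ltnW lt_an)) (t_incr _ _ _).
move=> s_incr.
have sV_incr : {homo (s^-1)%g : a b / a < b}.
  move=> a b lt_ab; rewrite ltnNge leq_eqVlt negb_or.
  apply/andP; split.
    by rewrite (inj_eq val_inj) (inj_eq perm_inj) eq_sym neq_ltn lt_ab.
  by apply/negP => /s_incr; rewrite !permKV ltnNge ltnW.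
apply/permP => a; apply/val_inj/eqP; rewrite perm1 eqn_leq le_perm // andbT.
by have := le_perm _ sV_incr (s a); rewrite permK.
Qed.

Section Entries.

Variable m : nat.
Implicit Types s p : 'S_m.+1.

(* One-line notation, positions and values counted from 0; junk for k > m. *)
Definition entry s k : nat := s (inord k).

Lemma entryE s (x : 'I_m.+1) : entry s x = s x.
Proof. by rewrite /entry inord_val. Qed.

Lemma entry_inj s a b : a <= m -> b <= m -> entry s a = entry s b -> a = b.
Proof.
move=> le_am le_bm /val_inj/perm_inj/(congr1 val).
by rewrite /= !inordK.
Qed.

Lemma entry1 k : k <= m -> entry 1%g k = k.
Proof. by move=> le_km; rewrite /entry perm1 inordK. Qed.

Lemma incr_prefix_entry s : incr_prefix (entry s) m.+1 = (s == 1%g).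
Proof.
apply/incr_prefixP/eqP => [s_incr | -> k k' lt_kk' lt_k'm].
  by apply: perm_homo_ltn_eq1 => a b lt_ab; rewrite -!entryE s_incr.
by rewrite !entry1 // -ltnS // (ltn_trans lt_kk').
Qed.

Lemma incr_prefix_entry1 k : k <= m.+1 -> incr_prefix (entry 1%g) k.
Proof. by move=> le_k; apply: incr_prefixW le_k _; rewrite incr_prefix_entry. Qed.

Definition adj_tperm i : 'S_m.+1 := tperm (inord i) (inord i.+1).

Lemma entry_adj_tperm_l s i : entry (adj_tperm i * s)%g i = entry s i.+1.
Proof. by rewrite /entry permM tpermL. Qed.

Lemma entry_adj_tperm_r s i : entry (adj_tperm i * s)%g i.+1 = entry s i.
Proof. by rewrite /entry permM tpermR. Qed.

Lemma entry_adj_tperm_id s i k : i < m -> k <= m -> k != i -> k != i.+1 ->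
  entry (adj_tperm i * s)%g k = entry s k.
Proof.
move=> lt_im le_km ne_ki ne_kSi.
have inord_neq a : a <= m -> a != k -> (inord a : 'I_m.+1) != inord k.
  by move=> le_am; rewrite -(inj_eq val_inj) /= !inordK.
by rewrite /entry permM tpermD // inord_neq // 1?eq_sym // ltnW.
Qed.

Lemma adj_tperm_neq1 i : i < m -> adj_tperm i != 1%g.
Proof.
move=> lt_im; apply/eqP => /(congr1 (fun t => entry (t * 1)%g i)).
by rewrite entry_adj_tperm_l mul1g !entry1 ?(ltnW lt_im) //; lia.
Qed.

Lemma adj_tperm_inj i j : i < m -> j < m -> adj_tperm i = adj_tperm j -> i = j.
Proof.
wlog lt_ij : i j / i < j.
  move=> W lt_im lt_jm E; case: (ltngtP i j) => [lt_ij|lt_ji|//].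
  - exact: W.
  - by rewrite (W j i).
move=> lt_im lt_jm /(congr1 (fun t => entry (t * 1)%g j)).
rewrite entry_adj_tperm_l entry1 //.
have [->|ne_jSi] := eqVneq j i.+1.
  by rewrite entry_adj_tperm_r entry1 ?(ltnW lt_im) //; lia.
by rewrite entry_adj_tperm_id ?entry1 ?(ltnW lt_jm) // ?gtn_eqF //; lia.
Qed.

Lemma entry_ltNge p a b : a <= m -> b <= m -> a != b ->
  (entry p a < entry p b) = ~~ (entry p b < entry p a).
Proof.
move=> le_am le_bm ne_ab; rewrite -leqNgt [RHS]leq_eqVlt.
by case: eqP => // eq_entry; rewrite (entry_inj le_am le_bm eq_entry) eqxx in ne_ab.
Qed.

Lemma is_descentE p (k : 'I_m.+1) :
  is_descent p k = (k < m) && (entry p k.+1 < entry p k).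
Proof.
apply/existsP/andP => [[j /andP[/eqP Ej lt_pj]] | [lt_km lt_pk]].
  by move: Ej => /= <-; rewrite !entryE -ltnS ltn_ord.
by exists (inord k.+1); rewrite /= inordK // eqxx -(entryE p k).
Qed.

Lemma nib_cases p :
  (p = 1%g /\ nib p = p) \/
  exists2 i, i < m & first_descent (entry p) i /\ nib p = (adj_tperm i * p)%g.
Proof.
rewrite /nib; case: pickP => [[i j] /and3P[/= /eqP Ej desc /forallP asc] | none].
  have lt_im : i < m by rewrite -ltnS -Ej.
  right; exists i => //; split; last by rewrite /adj_tperm -Ej !inord_val.
  rewrite /first_descent -[X in entry p X < _]Ej !entryE desc andbT.
  apply: incr_prefix_adj => k; rewrite ltnS => lt_ki.
  have lt_km := ltn_trans lt_ki lt_im.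
  have := asc (inord k); rewrite is_descentE inordK ?lt_ki ?lt_km; last exact: ltnW.
  by rewrite entry_ltNge ?negbK ?gtn_eqF // ltnW.
left; split => //; apply/eqP; rewrite -incr_prefix_entry; apply: incr_prefix_adj.
elim/ltn_ind => k IH; rewrite ltnS => lt_km.
rewrite entry_ltNge ?ltn_eqF ?(ltnW lt_km) //.
apply/negP => desc; have /= := none (inord k, inord k.+1).
rewrite !inordK ?eqxx //=; last exact: ltnW.
rewrite [_ < _]desc => /negbT/negP; apply.
apply/forallP => k0; apply/implyP => lt_k0k.
have lt_k0m := ltn_trans lt_k0k lt_km.
rewrite is_descentE negb_and -entry_ltNge ?IH ?orbT ?ltn_eqF //; exact: ltnW.
Qed.

Lemma entry_adj_tperm_lt s i k : i < m -> k < i ->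
  entry (adj_tperm i * s)%g k = entry s k.
Proof.
move=> lt_im lt_ki; rewrite entry_adj_tperm_id ?ltn_eqF //.
- by rewrite ltnW // (ltn_trans lt_ki).
- exact: ltn_trans lt_ki _.
Qed.

Lemma first_descent_adj_tperm s i : i < m ->
  first_descent (entry (adj_tperm i * s)%g) i = nib_site (entry s) i.
Proof.
move=> lt_im.
have fE k : k < i -> entry (adj_tperm i * s)%g k = entry s k.
  exact: entry_adj_tperm_lt.
rewrite /first_descent /nib_site entry_adj_tperm_l entry_adj_tperm_r.
apply/andP/andP => [[/incr_prefixP f_incr lt_si] |
                    [/forallP lt_sSi /incr_prefixP s_incr]].
  split.
    apply/forallP => -[k /=]; rewrite ltnS leq_eqVlt => /orP[/eqP -> // | lt_ki].
    by rewrite -fE // -entry_adj_tperm_l f_incr.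
  apply/incr_prefixP => k k' lt_kk' lt_k'i.
  by rewrite -!fE ?f_incr ?(ltn_trans lt_kk' lt_k'i) // ltnW.
split; last exact: (lt_sSi ord_max).
apply/incr_prefixP => k k' lt_kk'; rewrite ltnS leq_eqVlt => /orP[/eqP Ek' | lt_k'i].
  move: lt_kk'; rewrite Ek' => lt_ki.
  rewrite entry_adj_tperm_l fE //.
  by have := lt_sSi (inord k); rewrite inordK //; apply: ltnW.
by rewrite !fE ?s_incr // (ltn_trans lt_kk').
Qed.

Lemma first_descent_entry1 i : i < m -> ~~ first_descent (entry 1%g) i.
Proof.
by move=> lt_im; rewrite /first_descent !entry1 ?(ltnW lt_im) // ltnNge leqnSn andbF.
Qed.

Lemma nib1 : nib (1%g : 'S_m.+1) = 1%g.
Proof.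
have [[] // | [i lt_im [desc_i _]]] := nib_cases 1%g.
by move: desc_i; rewrite (negbTE (first_descent_entry1 lt_im)).
Qed.

Lemma nib_first_descent p i : i < m -> first_descent (entry p) i ->
  nib p = (adj_tperm i * p)%g.
Proof.
move=> lt_im desc_i; have [[p1 _] | [j lt_jm [desc_j ->]]] := nib_cases p.
  by move: desc_i; rewrite p1 (negbTE (first_descent_entry1 lt_im)).
by rewrite (first_descent_uniq desc_j desc_i).
Qed.

Lemma adj_tpermK i : cancel (mulg (adj_tperm i)) (mulg (adj_tperm i)).
Proof. by move=> s; rewrite mulgA tperm2 mul1g. Qed.

Lemma nib_fiberE s p : (nib p == s) =
  (p == 1%g) && (s == 1%g) ||
  [exists i : 'I_m, nib_site (entry s) i && (p == adj_tperm i * s)%g].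
Proof.
apply/eqP/orP => [<- | [/andP[/eqP-> /eqP->] | /existsP[i /andP[site_i /eqP ->]]]].
- have [[-> ->] | [i lt_im [desc_i ->]]] := nib_cases p; first by left; rewrite eqxx.
  right; apply/existsP; exists (Ordinal lt_im).
  by rewrite adj_tpermK eqxx andbT -first_descent_adj_tperm // adj_tpermK.
- exact: nib1.
- by rewrite (nib_first_descent (ltn_ord i)) ?adj_tpermK // first_descent_adj_tperm.
Qed.

Definition nsites s : nat := \sum_(i < m) nib_site (entry s) i.

Lemma card_nib_fiber s : #|[pred p | nib p == s]| = (s == 1%g) + nsites s.
Proof.
set A := [set p : 'S_m.+1 | (p == 1%g) && (s == 1%g)].
set B := [set (adj_tperm i * s)%g | i : 'I_m in [pred i : 'I_m | nib_site (entry s) i]].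
have cardA : #|A| = (s == 1%g).
  rewrite /A; case: eqP => _; last by apply: eq_card0 => p; rewrite !inE andbF.
  rewrite -[RHS]/1%N -(cards1 (1%g : 'S_m.+1)).
  by apply: eq_card => p; rewrite !inE andbT.
have cardB : #|B| = nsites s.
  rewrite card_in_imset => [|i j _ _ /mulIg /adj_tperm_inj eq_ij]; last first.
    exact/val_inj/eq_ij.
  by rewrite -sum1_card big_mkcond; apply: eq_bigr => i _; rewrite inE; case: nib_site.
have disjAB : [disjoint A & B].
  apply/pred0P => p /=; apply/negP => /andP[]; rewrite inE => /andP[/eqP p1 /eqP s1].
  case/imsetP => i _; rewrite p1 s1 mulg1 => /esym/eqP.
  exact/negP/adj_tperm_neq1.
have -> : #|[pred p | nib p == s]| = #|A :|: B|.
  apply: eq_card => p; rewrite !inE nib_fiberE; congr (_ || _).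
  apply/existsP/imsetP => [[i /andP[site_i /eqP ->]] | [i site_i ->]]; first by exists i.
  by exists i; rewrite eqxx andbT.
by rewrite -cardA -cardB; apply/eqP; rewrite (leq_card_setU A B).2.
Qed.

End Entries.

Lemma bump_ltn h i : (bump h i < h) = (i < h).
Proof. by rewrite !ltnNge leq_bump /unbump ltnn subn0. Qed.

Lemma big_lift_perm (R : Type) (idx : R) (op : Monoid.com_law idx) n (i0 : 'I_n.+1)
    (F : 'S_n.+1 -> R) :
  \big[op/idx]_(p : 'S_n.+1) F p
    = \big[op/idx]_(j : 'I_n.+1) \big[op/idx]_(s : 'S_n) F (lift_perm i0 j s).
Proof.
have lift_perm_inj : injective (fun js : 'I_n.+1 * 'S_n => lift_perm i0 js.1 js.2).
  move=> [j s] [j' s'] /= eq_lift.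
  have eq_j : j = j' by rewrite -(lift_perm_id i0 j s) eq_lift lift_perm_id.
  congr (_, _) => //; apply/permP => k; apply: (@lift_inj _ j).
  by rewrite -!(lift_perm_lift i0) eq_lift eq_j.
have lift_perm_bij := inj_card_bij lift_perm_inj.
rewrite pair_big (reindex _ (onW_bij _ (lift_perm_bij _))) //.
by rewrite card_prod card_ord !card_Sn factS.
Qed.

Lemma entry_lift_perm m (s : 'S_m.+1) (j : 'I_m.+2) k : k <= m ->
  entry (lift_perm ord_max j s) k = bump j (entry s k).
Proof.
move=> le_km; rewrite /entry (_ : inord k = lift ord_max (inord k)) ?lift_perm_lift //.
have lt_kSm : k < m.+1 := le_km.
by apply: val_inj; rewrite /= /bump !inordK ?(leqW lt_kSm) // [m < k]ltnNge le_km.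
Qed.

Lemma entry_lift_perm_max m (s : 'S_m.+1) (j : 'I_m.+2) :
  entry (lift_perm ord_max j s) m.+1 = j.
Proof.
rewrite /entry (_ : inord m.+1 = ord_max) ?lift_perm_id //.
by apply: val_inj; rewrite /= inordK.
Qed.

Lemma nsites_lift_perm m (s : 'S_m.+1) (j : 'I_m.+2) :
  nsites (lift_perm ord_max j s) = nsites s + (j == ord_max) && incr_prefix (entry s) m.
Proof.
have entry_liftE k : k <= m -> entry (lift_perm ord_max j s) k = bump j (entry s k).
  exact: entry_lift_perm.
rewrite /nsites big_ord_recr /=; congr (_ + _).
  apply: eq_bigr => i _; congr (nat_of_bool _).
  apply: (nib_site_comp (ltn_bump2 j)) => k le_kSi.
  exact/entry_liftE/(leq_trans le_kSi (ltn_ord i)).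
rewrite /nib_site entry_lift_perm_max.
rewrite (incr_prefix_comp (f := entry s) (ltn_bump2 j)); last first.
  by move=> k /ltnW; apply: entry_liftE.
congr (_ && _).
have -> : [forall k : 'I_m.+1, entry (lift_perm ord_max j s) k < j]
          = [forall k : 'I_m.+1, entry s k < j].
  by apply: eq_forallb => k; rewrite entry_liftE ?bump_ltn // -ltnS.
apply/forallP/eqP => [lt_sj | ->]; last by move=> k /=; rewrite entryE.
have := lt_sj (s^-1 ord_max)%g; rewrite entryE permKV /= => lt_mj.
by apply: val_inj; apply/eqP; rewrite /= eqn_leq -ltnS ltn_ord.
Qed.

Lemma nib_site_entry1 m i : i < m -> nib_site (entry (1%g : 'S_m.+1)) i.
Proof.
move=> lt_im; have le_m k : k <= i.+1 -> k <= m by move/leq_trans; apply.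
apply/andP; split.
  by apply/forallP => k; rewrite !entry1 ?le_m // ltnW.
apply/incr_prefixP => k k' lt_kk' lt_k'i.
have lt_k'm := ltn_trans lt_k'i lt_im.
by rewrite !entry1 //; apply: ltnW; last exact: ltn_trans lt_kk' lt_k'm.
Qed.

Lemma nsites1 m : nsites (1%g : 'S_m.+1) = m.
Proof.
rewrite /nsites (eq_bigr (fun _ => 1%N)) ?sum1_card ?card_ord // => i _.
by rewrite nib_site_entry1.
Qed.

Lemma incr_prefix_entry_lift_perm m (t : 'S_m.+1) (j : 'I_m.+2) :
  incr_prefix (entry (lift_perm ord_max j t)) m.+1 = (t == 1%g).
Proof.
rewrite -incr_prefix_entry; apply: (incr_prefix_comp (ltn_bump2 j)) => k.
by move=> lt_kSm; apply: entry_lift_perm.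
Qed.

Lemma sqrnD_bool (a : nat) (b : bool) : (a + b) ^ 2 = a ^ 2 + b * (2 * a + 1).
Proof. by case: b; rewrite /= ?addn0 ?mul0n ?addn0 // mul1n; ring. Qed.

Lemma sum_incr_prefix_nsites m :
  \sum_(s : 'S_m.+1) incr_prefix (entry s) m * (2 * nsites s + 1) = 2 * m ^ 2 + m + 1.
Proof.
case: m => [|m].
  rewrite (bigD1 1%g) //= big1 => [|s]; last by rewrite (permS1 s) eqxx.
  by rewrite nsites1 incr_prefix_entry1.
rewrite (big_lift_perm _ ord_max) /=.
under eq_bigr => j _.
  rewrite (bigD1 1%g) //= big1 => [|t /negbTE t_neq1]; last first.
    by rewrite incr_prefix_entry_lift_perm t_neq1.
  rewrite incr_prefix_entry_lift_perm eqxx mul1n addn0 nsites_lift_perm nsites1.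
  rewrite incr_prefix_entry1 // andbT.
  over.
rewrite (bigD1 ord_max) //= eqxx (eq_bigr (fun _ => 2 * m + 1)) => [|j /negbTE ->].
  by rewrite sum_nat_const cardC1 card_ord /=; nia.
by rewrite addn0.
Qed.

Definition sqsum_nsites m : nat := \sum_(s : 'S_m.+1) nsites s ^ 2.

Lemma sqsum_nsitesS m :
  sqsum_nsites m.+1 = m.+2 * sqsum_nsites m + (2 * m ^ 2 + m + 1).
Proof.
rewrite /sqsum_nsites (big_lift_perm _ ord_max) /=.
under eq_bigr => j _ do under eq_bigr => s _ do rewrite nsites_lift_perm sqrnD_bool.
under eq_bigr => j _ do rewrite big_split /=.
rewrite big_split /= sum_nat_const card_ord -sum_incr_prefix_nsites; congr (_ + _).
rewrite (bigD1 ord_max) //= eqxx [X in _ + X]big1 ?addn0 // => j /negbTE j_neq.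
by apply: big1 => s _; rewrite j_neq.
Qed.

Lemma sum_sq_card_nib_fiber m :
  \sum_(s : 'S_m.+1) #|[pred p | nib p == s]| ^ 2 = sqsum_nsites m + 2 * m + 1.
Proof.
under eq_bigr => s _ do rewrite card_nib_fiber addnC sqrnD_bool.
rewrite big_split /= -addnA; congr (_ + _).
rewrite (bigD1 1%g) //= big1 => [|s /negbTE ->]; last by rewrite mul0n.
by rewrite eqxx nsites1 mul1n addn0.
Qed.

Import Order.TTheory GRing.Theory Num.Theory.
Local Open Scope ring_scope.

Lemma eq_from_increments (V : nmodType) (u v d : nat -> V) :
  u 1%N = v 1%N -> (forall n, u n.+2 = u n.+1 + d n) ->
  (forall n, v n.+2 = v n.+1 + d n) -> forall n, u n.+1 = v n.+1.
Proof. by move=> uv1 uS vS; elim=> [//|n IH]; rewrite uS vS IH. Qed.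

Section DegreeOfNib.

Variable R : realType.

Definition deg_step n : R := 6 / (n.+2)`!%:R - 2 / (n.+1)`!%:R.

Lemma deg_nib_sqsum m :
  deg (@nib m.+1) = (sqsum_nsites m + 2 * m + 1)%:R / (m.+1)`!%:R :> R.
Proof. by rewrite /deg sum_sq_card_nib_fiber card_Sn. Qed.

Lemma deg_nib1 : deg (@nib 1) = 1 :> R.
Proof.
rewrite deg_nib_sqsum /sqsum_nsites big1 => [|s _]; last by rewrite /nsites big_ord0.
by rewrite divr1.
Qed.

Lemma deg_nibS m : deg (@nib m.+2) = deg (@nib m.+1) + deg_step m :> R.
Proof.
rewrite !deg_nib_sqsum sqsum_nsitesS /deg_step !factS !(natrD, natrM, natrX) -!nat1r.
by field; rewrite !nat1r !pnatr_eq0 -lt0n fact_gt0.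
Qed.

Definition deg_formula n : R :=
  ((n%:R - 1) * (n%:R - 2) ^+ 2 + n%:R ^+ 2) / (n`!)%:R
  + \sum_(1 <= k < n.-1) (k%:R * (k%:R ^+ 3 - k%:R + 1)) / ((k.+2)`!)%:R.

Lemma deg_formulaS n : deg_formula n.+2 = deg_formula n.+1 + deg_step n.
Proof.
pose F k : R := k%:R * (k%:R ^+ 3 - k%:R + 1) / (k.+2)`!%:R.
have sumS : \sum_(1 <= k < n.+1) F k = \sum_(1 <= k < n) F k + F n.
  case: n => [|n]; last by rewrite big_nat_recr.
  by rewrite !big_geq // /F !mul0r addr0.
rewrite /deg_formula /= -/(F _) sumS /F /deg_step !factS !(natrD, natrM, natrX) -!nat1r.
by field; rewrite !nat1r !pnatr_eq0 -lt0n fact_gt0.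
Qed.

Definition deg_closed n : R := 4 * series (exp_coeff 1) n - 9 + 6 * exp_coeff 1 n.

Lemma exp_coeff1 n : exp_coeff (1 : R) n = n`!%:R^-1.
Proof. by rewrite /exp_coeff /= expr1n mul1r. Qed.

Lemma deg_closedS n : deg_closed n.+2 = deg_closed n.+1 + deg_step n.
Proof.
rewrite /deg_closed /deg_step seriesSr /= !exp_coeff1 !factS !(natrD, natrM) -!nat1r.
by field; rewrite !nat1r !pnatr_eq0 -lt0n fact_gt0.
Qed.

Lemma deg_closed1 : deg_closed 1 = 1.
Proof. by rewrite /deg_closed /series /= big_nat1 !exp_coeff1 fact0 invr1; lra. Qed.

Lemma deg_nib_closed n : deg (@nib n.+1) = deg_closed n.+1.
Proof.
apply: (@eq_from_increments _ (fun n => deg (@nib n)) deg_closed deg_step).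
- by rewrite deg_nib1 deg_closed1.
- exact: deg_nibS.
- exact: deg_closedS.
Qed.

Lemma deg_formula_closed n : deg_formula n.+1 = deg_closed n.+1.
Proof.
apply: (eq_from_increments _ deg_formulaS deg_closedS).
by rewrite deg_closed1 /deg_formula big_geq // subrr mul0r add0r expr1n addr0 divr1.
Qed.

Local Open Scope classical_set_scope.

Lemma deg_closed_cvg : deg_closed @ \oo --> 4 * expR 1 - 9.
Proof.
rewrite -[4 * expR 1 - 9]addr0 -(mulr0 6).
apply: cvgD; first apply: cvgB; first apply: cvgMl_tmp.
- exact: is_cvg_series_exp_coeff.
- apply: cvg_cst.
- apply: cvgMl_tmp; exact: cvg_exp_coeff.
Qed.

End DegreeOfNib.

Local Open Scope classical_set_scope.

Theorem mainTheorem11 (R : realType) :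
  (forall n : nat, (1 <= n)%N ->
     deg (@nib n) =
       ((n%:R - 1) * (n%:R - 2) ^+ 2 + n%:R ^+ 2) / (n`!)%:R
       + \sum_(1 <= k < n.-1) (k%:R * (k%:R ^+ 3 - k%:R + 1)) / ((k.+2)`!)%:R :> R)
  /\ ((fun n : nat => (deg (@nib n) : R)) @ \oo --> 4 * expR 1 - 9).
Proof.
split => [[//|n] _ | ]; first by rewrite deg_nib_closed -deg_formula_closed.
apply: (@cvg_trans _ (deg_closed R @ \oo)); last exact: deg_closed_cvg.
apply: near_eq_cvg.
by exists 1%N => // -[//|n] _; rewrite /= deg_nib_closed.
Qed.
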